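(* Suppose $S\subseteq\mathbb{N}^{\mathbb{N}}$ is defined by a sentence $\forall x\,\exists y\,\phi$ of $\mathscr{L}_{\max}$, where $\phi$ is quantifier-free. If $S$ is countable, then $S$ is guessable.
   Context: A function $G:\mathbb{N}^{<\mathbb{N}}\to\{0,1\}$ ($\mathbb{N}^{<\mathbb{N}}$ = finite sequences of naturals) is a guesser for $S\subseteq\mathbb{N}^{\mathbb{N}}$ if for every $f:\mathbb{N}\to\mathbb{N}$ there is $m>0$ such that for all $n>m$, $G(f(0),\ldots,f(n))$ equals $1$ if $f\in S$ and $0$ if $f\notin S$; $S$ is guessable if it has a guesser. The language $\mathscr{L}_{\max}$ is a first-order language extended with ellipses: constant symbols $\mathbf{n}$ (also $\bar n$) for each $n\in\mathbb{N}$; an $n$-ary function symbol $\tilde w$ for each $w:\mathbb{N}^n\to\mathbb{N}$ ($n>0$); an $n$-ary predicate symbol $\tilde p$ for each $p\subseteq\mathbb{N}^n$ ($n>0$); an $\mathbb{N}^{<\mathbb{N}}$-ary function symbol $\tilde G$ for each $G:\mathbb{N}^{<\mathbb{N}}\to\mathbb{N}$ (applicable to any finite number of arguments); a unary function symbol $\mathbf{f}$; and a symbol $\cdots_x$ for each variable $x$. Besides the usual terms, for $\mathbb{N}^{<\mathbb{N}}$-ary $G$, terms $u,v$ and variable $x$, $G(u(\mathbf{0}),\cdots_x,u(v))$ is a term with free variables $(FV(u)\setminus\{x\})\cup FV(v)$. Formulas are built as usual. For $f:\mathbb{N}\to\mathbb{N}$, $\mathscr{M}_f$ is the structure on $\mathbb{N}$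 interpreting every symbol as the object it names and $\mathbf{f}$ as $f$; terms are evaluated as usual, plus $G(u(\mathbf{0}),\cdots_x,u(v))^{s}=G\big(u(x|\mathbf{0})^{s},\ldots,u(x|\overline{v^{s}})^{s}\big)$ under an assignment $s$, where $u(x|c)$ is substitution of the constant $c$ for $x$ in $u$. A sentence $\phi$ defines $S\subseteq\mathbb{N}^{\mathbb{N}}$ if for every $f:\mathbb{N}\to\mathbb{N}$, $\mathscr{M}_f\models\phi$ iff $f\in S$. *)

From Stdlib Require Import List Arith.
Import ListNotations.

Definition var := nat.
Definition assignment := var -> nat.
Definition upd (s : assignment) (x : var) (c : nat) : assignment :=
  fun z => if Nat.eqb z x then c else s z.

(* A tuple of k argument terms is given as a function
   [args : nat -> term] of which only the indices [0 .. k-1] are used.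
   Finitary function symbols of arity n+1 (>0) are named by the function
   [w : list nat -> nat] restricted to lists of length n+1. *)
Inductive term : Type :=
| TVar   : var -> term
| TConst : nat -> term
| TFun   : forall (n : nat), (list nat -> nat) -> (nat -> term) -> term
| TG     : (list nat -> nat) -> forall (k : nat), (nat -> term) -> term
| Tf     : term -> term
| TEll   : (list nat -> nat) -> term -> var -> term -> term.
                                  (* TEll G u x v = G(u(0), ..._x, u(v)) *)

Inductive formula : Type :=
| FEq   : term -> term -> formula
| FPred : forall (n : nat), (list nat -> Prop) -> (nat -> term) -> formula
                                         (* p~(t_0,...,t_n), p subset of N^(n+1) *)
| FFalse : formula
| FNot  : formula -> formula
| FAnd  : formula -> formula -> formula
| FOr   : formula -> formula -> formula
| FImp  : formula -> formula -> formula
| FAll  : var -> formula -> formula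
| FEx   : var -> formula -> formula.

(* G(u(0),...,_x,u(v))^s = G(u(x|0)^s, ..., u(x|v^s)^s); the value of the
   substituted term u(x|c) under s is the value of u under s[x:=c]. *)
Fixpoint eval (f : nat -> nat) (s : assignment) (t : term) : nat :=
  match t with
  | TVar x => s x
  | TConst n => n
  | TFun n w args => w (map (fun i => eval f s (args i)) (seq 0 (S n)))
  | TG G k args => G (map (fun i => eval f s (args i)) (seq 0 k))
  | Tf t1 => f (eval f s t1)
  | TEll G u x v =>
      G (map (fun i => eval f (upd s x i) u) (seq 0 (S (eval f s v))))
  end.

Fixpoint sat (f : nat -> nat) (s : assignment) (phi : formula) : Prop :=
  match phi with
  | FEq t1 t2 => eval f s t1 = eval f s t2
  | FPred n p args => p (map (fun i => eval f s (args i)) (seq 0 (S n)))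
  | FFalse => False
  | FNot a => ~ sat f s a
  | FAnd a b => sat f s a /\ sat f s b
  | FOr a b => sat f s a \/ sat f s b
  | FImp a b => sat f s a -> sat f s b
  | FAll x a => forall c : nat, sat f (upd s x c) a
  | FEx x a => exists c : nat, sat f (upd s x c) a
  end.

Fixpoint free_in_term (z : var) (t : term) : Prop :=
  match t with
  | TVar x => z = x
  | TConst _ => False
  | TFun n _ args => exists i, i <= n /\ free_in_term z (args i)
  | TG _ k args => exists i, i < k /\ free_in_term z (args i)
  | Tf t1 => free_in_term z t1
  | TEll _ u x v => (free_in_term z u /\ z <> x) \/ free_in_term z v
  end.

Fixpoint free_in (z : var) (phi : formula) : Prop :=
  match phi with
  | FEq t1 t2 => free_in_term z t1 \/ free_in_term z t2
  | FPred n _ args => exists i, i <= n /\ free_in_term z (args i)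
  | FFalse => False
  | FNot a => free_in z a
  | FAnd a b | FOr a b | FImp a b => free_in z a \/ free_in z b
  | FAll x a | FEx x a => free_in z a /\ z <> x
  end.

Definition sentence (phi : formula) : Prop := forall z, ~ free_in z phi.

Fixpoint quantifier_free (phi : formula) : Prop :=
  match phi with
  | FEq _ _ | FPred _ _ _ | FFalse => True
  | FNot a => quantifier_free a
  | FAnd a b | FOr a b | FImp a b => quantifier_free a /\ quantifier_free b
  | FAll _ _ | FEx _ _ => False
  end.

(* M_f |= phi for a sentence (the assignment is irrelevant; we fix one). *)
Definition models (f : nat -> nat) (phi : formula) : Prop := sat f (fun _ => 0) phi.

Definition defines (phi : formula) (S : (nat -> nat) -> Prop) : Prop :=
  sentence phi /\ forall f : nat -> nat, models f phi <-> S f.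

(* Countable (finite or countably infinite, possibly empty). *)
Definition countable (S : (nat -> nat) -> Prop) : Prop :=
  exists e : nat -> (nat -> nat), forall f, S f -> exists n, e n = f.

Definition init_seg (f : nat -> nat) (n : nat) : list nat := map f (seq 0 (S n)).

Definition guesser (G : list nat -> bool) (S : (nat -> nat) -> Prop) : Prop :=
  forall f : nat -> nat, exists m, 0 < m /\
    forall n, m < n -> (G (init_seg f n) = true <-> S f).

Definition guessable (S : (nat -> nat) -> Prop) : Prop :=
  exists G, guesser G S.

(* Quantifier-free formulas are continuous: whether M_f satisfies phi under a
   fixed assignment depends only on a finite prefix of f, since every term,
   ellipsis terms included, reads only finitely many values of f.  Given an
   enumeration e of S, guess "f is in S" after seeing a prefix s when some
   e i in S extends s and s already forces, for each c < i, a witness d < |s|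
   to phi(c, d).  If f = e i is in S, its finitely many witnesses for c < i
   are eventually forced.  If f is not in S, some c0 has no witness: then no
   prefix of f forces a witness for c0, which rules out every i > c0, and the
   finitely many e i with i <= c0 that lie in S differ from f, hence
   eventually stop extending its prefixes. *)
From Stdlib Require Import List Arith Lia Classical ClassicalEpsilon FunctionalExtensionality.

Definition eventually (P : nat -> Prop) : Prop := exists N, forall n, N <= n -> P n.

Lemma eventually_mono (P Q : nat -> Prop) :
  (forall n, P n -> Q n) -> eventually P -> eventually Q.
Proof. intros HPQ [N HN]; exists N; auto. Qed.

Lemma eventually_and (P Q : nat -> Prop) :
  eventually P -> eventually Q -> eventually (fun n => P n /\ Q n).
Proof.
  intros [N HN] [M HM]; exists (max N M); intros n Hn; split;
    [apply HN | apply HM]; lia.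
Qed.

Lemma eventually_ge (k : nat) : eventually (fun n => k <= n).
Proof. exists k; auto. Qed.

Lemma eventually_forall_lt (m : nat) (P : nat -> nat -> Prop) :
  (forall i, i < m -> eventually (P i)) ->
  eventually (fun n => forall i, i < m -> P i n).
Proof.
  induction m as [|m IH]; intros H.
  - exists 0; intros; lia.
  - apply (eventually_mono (fun n => (forall i, i < m -> P i n) /\ P m n)).
    + intros n [Hlt Hm] i Hi.
      destruct (Nat.eq_dec i m) as [->|Hne]; [exact Hm | apply Hlt; lia].
    + apply eventually_and; [apply IH; auto | apply H; lia].
Qed.

Definition agree_upto (g f : nat -> nat) (N : nat) : Prop :=
  forall k, k < N -> g k = f k.

Lemma agree_upto_le (g f : nat -> nat) (N N' : nat) :
  agree_upto g f N -> N' <= N -> agree_upto g f N'.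
Proof. intros H Hle k Hk; apply H; lia. Qed.

Lemma map_seq_ext {A : Type} (F G : nat -> A) (k : nat) :
  (forall i, i < k -> F i = G i) -> map F (seq 0 k) = map G (seq 0 k).
Proof.
  intros H; apply map_ext_in; intros a Ha; apply in_seq in Ha; apply H; lia.
Qed.

Lemma eval_prefix_determined (t : term) (f : nat -> nat) (s : assignment) :
  eventually (fun N => forall g, agree_upto g f N -> eval g s t = eval f s t).
Proof.
  revert s.
  induction t as [z|c|n w args IH|G k args IH|t IH|G u IHu z v IHv]; intros s;
    cbn [eval].
  - exists 0; reflexivity.
  - exists 0; reflexivity.
  - eapply eventually_mono; cycle 1.
    { exact (eventually_forall_lt (S n) _ (fun i _ => IH i s)). }
    intros N HN g Hg; f_equal; apply map_seq_ext; intros i Hi; apply HN; auto.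
  - eapply eventually_mono; cycle 1.
    { exact (eventually_forall_lt k _ (fun i _ => IH i s)). }
    intros N HN g Hg; f_equal; apply map_seq_ext; intros i Hi; apply HN; auto.
  - eapply eventually_mono; cycle 1.
    { apply eventually_and; [apply IH | apply (eventually_ge (S (eval f s t)))]. }
    intros N [HN Hge] g Hg; rewrite HN by exact Hg; apply Hg; lia.
  - eapply eventually_mono; cycle 1.
    { apply eventually_and; [apply IHv |].
      exact (eventually_forall_lt (S (eval f s v)) _ (fun i _ => IHu (upd s z i))). }
    intros N [Hv Hu] g Hg; rewrite Hv by exact Hg.
    f_equal; apply map_seq_ext; intros i Hi; apply Hu; auto.
Qed.

Lemma sat_prefix_determined (phi : formula) (f : nat -> nat) (s : assignment) :
  quantifier_free phi ->
  eventually (fun N => forall g, agree_upto g f N -> (sat g s phi <-> sat f s phi)).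
Proof.
  induction phi as [t1 t2|n p args| |a IH|a IHa b IHb|a IHa b IHb|a IHa b IHb|z a IH|z a IH];
    cbn [sat quantifier_free]; intros Hq.
  5-7: destruct Hq as [qa qb]; eapply eventually_mono;
    [| apply eventually_and; [apply IHa, qa | apply IHb, qb]];
    intros N [Ha Hb] g Hg; specialize (Ha g Hg); specialize (Hb g Hg); tauto.
  all: try contradiction.
  - eapply eventually_mono; cycle 1.
    { apply eventually_and;
        [apply (eval_prefix_determined t1) | apply (eval_prefix_determined t2)]. }
    intros N [H1 H2] g Hg; rewrite H1, H2 by exact Hg; reflexivity.
  - eapply eventually_mono; cycle 1.
    { exact (eventually_forall_lt (S n) _
        (fun i _ => eval_prefix_determined (args i) f s)). }
    intros N HN g Hg; rewrite (map_seq_ext _ (fun i => eval f s (args i))); [reflexivity|].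
    intros i Hi; apply HN; auto.
  - exists 0; reflexivity.
  - eapply eventually_mono; [|apply IH, Hq].
    intros N HN g Hg; specialize (HN g Hg); tauto.
Qed.

Definition extends (g : nat -> nat) (s : list nat) : Prop :=
  forall k, k < length s -> g k = nth k s 0.

Lemma length_init_seg (f : nat -> nat) (n : nat) : length (init_seg f n) = S n.
Proof. unfold init_seg; rewrite length_map, length_seq; reflexivity. Qed.

Lemma extends_init_seg (g f : nat -> nat) (n : nat) :
  extends g (init_seg f n) <-> agree_upto g f (S n).
Proof.
  unfold extends, agree_upto; rewrite length_init_seg.
  split; intros H k Hk; specialize (H k Hk); unfold init_seg in *;
    rewrite (nth_indep _ 0 (f 0)), map_nth, seq_nth in *
      by (rewrite ?length_map, ?length_seq; lia); auto.
Qed.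

Lemma extends_own_init_seg (f : nat -> nat) (n : nat) : extends f (init_seg f n).
Proof. apply extends_init_seg; intros k _; reflexivity. Qed.

Lemma eventually_not_extends (g f : nat -> nat) :
  g <> f -> eventually (fun n => ~ extends g (init_seg f n)).
Proof.
  intros Hgf.
  destruct (not_all_ex_not _ _ (fun H => Hgf (functional_extensionality g f H)))
    as [k Hk].
  exists k; intros n Hn Hext; apply Hk, extends_init_seg with n; auto; lia.
Qed.

Lemma guessable_of_eventual_test (A : (nat -> nat) -> Prop) (C : list nat -> Prop) :
  (forall f, A f -> eventually (fun n => C (init_seg f n))) ->
  (forall f, ~ A f -> eventually (fun n => ~ C (init_seg f n))) ->
  guessable A.
Proof.
  intros Hin Hout.
  exists (fun s => if excluded_middle_informative (C s) then true else false).
  intros f; destruct (classic (A f)) as [Hf|Hf].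
  - destruct (Hin f Hf) as [N HN]; exists (S N); split; [lia|]; intros n Hn.
    destruct excluded_middle_informative as [_|HC]; [tauto|].
    exfalso; apply HC, HN; lia.
  - destruct (Hout f Hf) as [N HN]; exists (S N); split; [lia|]; intros n Hn.
    destruct excluded_middle_informative as [HC|_]; [|split; [discriminate | tauto]].
    exfalso; apply (HN n); [lia | exact HC].
Qed.

Section ForallExistsGuesser.

Variables (A : (nat -> nat) -> Prop) (x y : var) (phi : formula) (e : nat -> nat -> nat).
Hypothesis phi_qf : quantifier_free phi.
Hypothesis A_def : forall f, models f (FAll x (FEx y phi)) <-> A f.

Definition witness_env (c d : nat) : assignment := upd (upd (fun _ => 0) x c) y d.

Lemma mem_iff_witnesses (f : nat -> nat) :
  A f <-> forall c, exists d, sat f (witness_env c d) phi.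
Proof. rewrite <- A_def; reflexivity. Qed.

Definition forces_witness (s : list nat) (c : nat) : Prop :=
  exists d, d < length s /\ forall g, extends g s -> sat g (witness_env c d) phi.

Definition candidate (s : list nat) : Prop :=
  exists i, A (e i) /\ extends (e i) s /\ forall c, c < i -> forces_witness s c.

Lemma eventually_forces_witness (f : nat -> nat) (c d : nat) :
  sat f (witness_env c d) phi -> eventually (fun n => forces_witness (init_seg f n) c).
Proof.
  intros Hd.
  destruct (eventually_and _ _ (sat_prefix_determined phi f (witness_env c d) phi_qf)
    (eventually_ge d)) as [N HN].
  exists N; intros n Hn; exists d; rewrite length_init_seg.
  destruct (HN n Hn) as [Hsat Hle]; split; [lia|].
  intros g Hg; apply Hsat; [|exact Hd].
  apply agree_upto_le with (S n); [apply extends_init_seg, Hg | lia].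
Qed.

Lemma eventually_candidate (i : nat) :
  A (e i) -> eventually (fun n => candidate (init_seg (e i) n)).
Proof.
  intros Hi.
  assert (Hforce : forall c, c < i -> eventually (fun n => forces_witness (init_seg (e i) n) c)).
  { intros c _; destruct (proj1 (mem_iff_witnesses (e i)) Hi c) as [d Hd].
    exact (eventually_forces_witness _ c d Hd). }
  eapply eventually_mono; [|exact (eventually_forall_lt i _ Hforce)].
  intros n Hn; exists i; split; [exact Hi | split; [apply extends_own_init_seg | exact Hn]].
Qed.

Lemma eventually_not_candidate (f : nat -> nat) :
  ~ A f -> eventually (fun n => ~ candidate (init_seg f n)).
Proof.
  intros Hf.
  destruct (not_all_ex_not _ _ (fun H => Hf (proj2 (mem_iff_witnesses f) H))) as [c0 Hc0].
  assert (Hearly : forall i, i < S c0 ->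
    eventually (fun n => A (e i) -> ~ extends (e i) (init_seg f n))).
  { intros i _; destruct (classic (A (e i))) as [Hi|Hi].
    - assert (Hne : e i <> f) by (intros Heq; rewrite Heq in Hi; contradiction).
      eapply eventually_mono; [|exact (eventually_not_extends _ _ Hne)]; auto.
    - exists 0; intros; contradiction. }
  eapply eventually_mono; [|exact (eventually_forall_lt (S c0) _ Hearly)].
  intros n Hn [i [Hi [Hext Hforce]]].
  destruct (le_lt_dec i c0) as [Hle|Hlt].
  - apply (Hn i); auto; lia.
  - destruct (Hforce c0 Hlt) as [d [_ Hd]].
    apply Hc0; exists d; apply Hd, extends_own_init_seg.
Qed.

End ForallExistsGuesser.

Theorem lemma4p8 (S : (nat -> nat) -> Prop) (x y : var) (phi : formula) :
  quantifier_free phi ->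
  defines (FAll x (FEx y phi)) S ->
  countable S ->
  guessable S.
Proof.
  intros Hq [_ Hdef] [e He].
  apply (guessable_of_eventual_test S (candidate S x y phi e)).
  - intros f Hf; destruct (He f Hf) as [i <-].
    exact (eventually_candidate S x y phi e Hq Hdef i Hf).
  - exact (eventually_not_candidate S x y phi e Hdef).
Qed.
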